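(* Let $b\ge2$ be an integer, $\lambda\in(1/b,1)$, $k\in\mathbb{Z}_+$, let $\tau$ be a $\mathbb{Z}$-periodic $C^k$ function, let $p\ge2$ be an integer with $\gcd(p,b)=1$, and let $\tilde\tau(x)=\tau(px)$. Then (i) $t\in\mathbb{R}$ is a $C^k$-regulating period of $W^\tau$ if and only if $t/p$ is a $C^k$-regulating period of $W^{\tilde\tau}$; (ii) $\tau$ satisfies condition (H) if and only if $\tilde\tau$ satisfies condition (H).
   Context: $W^\psi(x)=\sum_{n\ge0}\lambda^n\psi(b^nx)$; $t$ is a $C^k$-regulating period of $W^\psi$ if $x\mapsto W^\psi(x+t)-W^\psi(x)$ is $C^k$. With $\Sigma=\{0,\dots,b-1\}^{\mathbb{Z}_+}$, $\gamma=1/(b\lambda)$ and $Y^\psi(x,\mathbf{j})=-\sum_{n\ge1}\gamma^n\psi'\!\left(\frac{x}{b^n}+\frac{j_1}{b^n}+\frac{j_2}{b^{n-1}}+\cdots+\frac{j_n}{b}\right)$, $\psi$ satisfies condition (H) if $Y^\psi(\cdot,\mathbf{j})-Y^\psi(\cdot,\mathbf{i})\not\equiv0$ for all $\mathbf{i}\ne\mathbf{j}\in\Sigma$. *)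

From Stdlib Require Import Reals Lra Lia.
From Coquelicot Require Import Coquelicot.
Open Scope R_scope.

Definition W (b : nat) (lam : R) (psi : R -> R) (x : R) : R :=
  Series (fun n => lam ^ n * psi (INR b ^ n * x)).

Definition Ck (k : nat) (f : R -> R) : Prop :=
  (forall m : nat, (m < k)%nat -> forall x, ex_derive_n f (S m) x) /\
  (forall x, continuous (Derive_n f k) x).

Definition regulating_period (b : nat) (lam : R) (k : nat) (psi : R -> R) (t : R) : Prop :=
  Ck k (fun x => W b lam psi (x + t) - W b lam psi x).

Definition Zperiodic (f : R -> R) : Prop := forall x, f (x + 1) = f x.

(* Sigma = {0,...,b-1}^{Z_+}; a sequence (j_1, j_2, ...) is encoded as
   j : nat -> nat with j_m = j (m-1). *)
Definition in_Sigma (b : nat) (j : nat -> nat) : Prop := forall m, (j m < b)%nat.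

(* Y^psi(x, j) = - sum_{n>=1} gamma^n psi'(x/b^n + j_1/b^n + ... + j_n/b),
   gamma = 1/(b lam). Index n here stands for n+1 in the paper. *)
Definition Y (b : nat) (lam : R) (psi : R -> R) (x : R) (j : nat -> nat) : R :=
  - Series (fun n =>
      (1 / (INR b * lam)) ^ (S n) *
      Derive psi (x / INR b ^ (S n) +
                  sum_f_R0 (fun m => INR (j m) / INR b ^ (S n - m)) n)).

Definition condH (b : nat) (lam : R) (psi : R -> R) : Prop :=
  forall i j : nat -> nat, in_Sigma b i -> in_Sigma b j -> i <> j ->
    exists x, Y b lam psi x j - Y b lam psi x i <> 0.

From Stdlib Require Import Reals Arith Lra Lia.
From Coquelicot Require Import Coquelicot.
From Stdlib Require Import FunctionalExtensionality ClassicalEpsilon.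
Open Scope R_scope.

(* Proof idea.
   (i) Since W^{tau(p.)}(x) = W^tau(p x), the difference function of W^{tau~}
   with step t/p is the difference function of W^tau with step t, composed with
   the dilation x |-> p x; being C^k is invariant under dilations.
   (ii) A digit sequence j in Sigma is a b-adic integer N(j) = sum_m j_m b^m,
   read through its truncations N_n(j) = N(j) mod b^(n+1).  Multiplication by p
   acts on Sigma (j |-> j' with N_n(j') = p N_n(j) mod b^(n+1)), and because
   gcd(p, b) = 1 this action is a bijection of Sigma.  By Z-periodicity of
   tau', Y^{tau~}(x, j) = p Y^tau(p x, j'), so a pair i <> j witnessing
   condition (H) for one function is transported to a witnessing pair for the
   other. *)

Section Digits.
Local Open Scope nat_scope.

Lemma coprime_pow (p b n : nat) : Nat.gcd p b = 1 -> Nat.gcd p (b ^ n) = 1.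
Proof.
  intros Hpb. induction n as [|n IH]; simpl.
  - now rewrite Nat.gcd_comm.
  - set (d := Nat.gcd p (b * b ^ n)).
    assert (Hdp : Nat.divide d p) by apply Nat.gcd_divide_l.
    assert (Hdb : Nat.gcd d b = 1).
    { apply Nat.divide_1_r. rewrite <- Hpb. apply Nat.gcd_greatest.
      - eapply Nat.divide_trans; [apply Nat.gcd_divide_l | exact Hdp].
      - apply Nat.gcd_divide_r. }
    assert (Hdbn : Nat.divide d (b ^ n)).
    { eapply Nat.gauss; [apply Nat.gcd_divide_r | exact Hdb]. }
    apply Nat.divide_1_r. rewrite <- IH. now apply Nat.gcd_greatest.
Qed.

Lemma mul_mod_cancel (m p x y : nat) : 0 < m -> Nat.gcd m p = 1 ->
  x < m -> y < m -> (p * x) mod m = (p * y) mod m -> x = y.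
Proof.
  intros Hm Hg.
  assert (Hle : forall x y, x <= y -> y < m -> (p * x) mod m = (p * y) mod m -> x = y).
  { clear x y. intros x y Hxy Hy E.
    pose proof (Nat.div_mod_eq (p * x) m). pose proof (Nat.div_mod_eq (p * y) m).
    assert (Hdiv : Nat.divide m (p * (y - x))).
    { exists ((p * y) / m - (p * x) / m).
      rewrite Nat.mul_sub_distr_r, Nat.mul_sub_distr_l. assert (p * x <= p * y) by nia. nia. }
    destruct (Nat.gauss _ _ _ Hdiv Hg) as [[|q] Hq]; nia. }
  intros Hx Hy E. destruct (Nat.le_ge_cases x y).
  - now apply Hle.
  - symmetry. now apply Hle.
Qed.

Lemma mod_mod_mul (m c a : nat) : (a mod (m * c)) mod m = a mod m.
Proof.
  rewrite Nat.Div0.mod_mul_r, (Nat.mul_comm m), Nat.Div0.mod_add.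
  apply Nat.Div0.mod_mod.
Qed.

Fixpoint digits_value (b : nat) (j : nat -> nat) (n : nat) : nat :=
  match n with
  | 0 => j 0
  | S n' => digits_value b j n' + j n * b ^ n
  end.

Lemma digits_value_lt (b : nat) (j : nat -> nat) (n : nat) :
  in_Sigma b j -> digits_value b j n < b ^ S n.
Proof.
  intros Hj. induction n as [|n IH]; simpl.
  - specialize (Hj 0). lia.
  - specialize (Hj (S n)). simpl in IH. nia.
Qed.

Lemma digits_value_inj (b : nat) (i j : nat -> nat) : 0 < b ->
  (forall n, digits_value b i n = digits_value b j n) -> i = j.
Proof.
  intros Hb H. apply functional_extensionality. intros [|n].
  - exact (H 0).
  - pose proof (H (S n)) as E. cbn [digits_value] in E. rewrite (H n) in E.
    assert (0 < b ^ S n) by (apply Nat.neq_0_lt_0, Nat.pow_nonzero; lia).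
    apply (Nat.mul_cancel_r _ _ (b ^ S n)); lia.
Qed.

Lemma digits_of_residues (b : nat) (M : nat -> nat) : 0 < b ->
  (forall n, M n < b ^ S n) -> (forall n, M (S n) mod b ^ S n = M n) ->
  exists j, in_Sigma b j /\ forall n, digits_value b j n = M n.
Proof.
  intros Hb Hlt Hcompat. exists (fun m => M m / b ^ m). split.
  - intros m. apply Nat.Div0.div_lt_upper_bound.
    specialize (Hlt m). simpl in Hlt. lia.
  - induction n as [|n IH]; simpl.
    + apply Nat.div_1_r.
    + rewrite IH, <- (Hcompat n).
      pose proof (Nat.div_mod_eq (M (S n)) (b * b ^ n)). simpl. lia.
Qed.

Definition mul_digits (b p : nat) (j j' : nat -> nat) : Prop :=
  forall n, digits_value b j' n = (p * digits_value b j n) mod b ^ S n.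

Lemma mul_digits_exists (b p : nat) (j : nat -> nat) : 0 < b ->
  exists j', in_Sigma b j' /\ mul_digits b p j j'.
Proof.
  intros Hb. apply digits_of_residues; auto.
  - intros n. apply Nat.mod_upper_bound, Nat.pow_nonzero. lia.
  - intros n. change (b ^ S (S n)) with (b * b ^ S n).
    rewrite (Nat.mul_comm b), mod_mod_mul. cbn [digits_value].
    rewrite Nat.mul_add_distr_l, Nat.mul_assoc. apply Nat.Div0.mod_add.
Qed.

Lemma mul_digits_injective (b p : nat) (i j k : nat -> nat) : 0 < b ->
  Nat.gcd p b = 1 -> in_Sigma b i -> in_Sigma b j ->
  mul_digits b p i k -> mul_digits b p j k -> i = j.
Proof.
  intros Hb Hg Hi Hj Hik Hjk. apply (digits_value_inj b); auto. intros n.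
  apply (mul_mod_cancel (b ^ S n) p).
  - apply Nat.neq_0_lt_0, Nat.pow_nonzero. lia.
  - rewrite Nat.gcd_comm. now apply coprime_pow.
  - now apply digits_value_lt.
  - now apply digits_value_lt.
  - now rewrite <- Hik, <- Hjk.
Qed.

Lemma mul_digits_surjective (b p : nat) (j : nat -> nat) : 0 < b -> 0 < p ->
  Nat.gcd p b = 1 -> in_Sigma b j ->
  exists j', in_Sigma b j' /\ mul_digits b p j' j.
Proof.
  intros Hb Hp Hg Hj.
  assert (Hpos : forall n, b ^ n <> 0) by (intros; apply Nat.pow_nonzero; lia).
  assert (Hinv : forall n, exists u, (p * u) mod b ^ S n = 1 mod b ^ S n).
  { intros n. destruct (Nat.gcd_bezout_pos p (b ^ S n) Hp) as [u [v Huv]].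
    rewrite coprime_pow in Huv by auto. exists u.
    now rewrite Nat.mul_comm, Huv, Nat.Div0.mod_add. }
  destruct (choice _ Hinv) as [q Hq].
  set (M := fun n => (q n * digits_value b j n) mod b ^ S n).
  assert (HM : forall n, (p * M n) mod b ^ S n = digits_value b j n).
  { intros n. unfold M.
    rewrite Nat.Div0.mul_mod_idemp_r, Nat.mul_assoc, Nat.Div0.mul_mod, Hq,
      <- Nat.Div0.mul_mod, Nat.mul_1_l.
    now apply Nat.mod_small, digits_value_lt. }
  destruct (digits_of_residues b M Hb) as [j' [Hj' Hval]].
  - intros n. now apply Nat.mod_upper_bound.
  - intros n. apply (mul_mod_cancel (b ^ S n) p).
    + now apply Nat.neq_0_lt_0.
    + rewrite Nat.gcd_comm. now apply coprime_pow.
    + now apply Nat.mod_upper_bound.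
    + now apply Nat.mod_upper_bound.
    + rewrite HM, Nat.Div0.mul_mod_idemp_r.
      rewrite <- (mod_mod_mul (b ^ S n) b (p * M (S n))), (Nat.mul_comm _ b).
      change (b * b ^ S n) with (b ^ S (S n)). rewrite HM. cbn [digits_value].
      rewrite Nat.Div0.mod_add. now apply Nat.mod_small, digits_value_lt.
  - exists j'. split; auto. intros n. now rewrite Hval, HM.
Qed.

End Digits.

Lemma digit_sum_value (b : nat) (j : nat -> nat) (n : nat) : (0 < b)%nat ->
  sum_f_R0 (fun m => INR (j m) / INR b ^ (S n - m)) n
  = INR (digits_value b j n) / INR b ^ S n.
Proof.
  intros Hb. assert (HB : INR b <> 0) by (apply not_0_INR; lia).
  assert (Hval : INR (digits_value b j n) = sum_f_R0 (fun m => INR (j m) * INR b ^ m) n).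
  { induction n as [|n IH]; cbn [digits_value sum_f_R0].
    - simpl. ring.
    - rewrite plus_INR, mult_INR, pow_INR, IH. ring. }
  rewrite Hval. unfold Rdiv at 2. rewrite Rmult_comm, scal_sum.
  apply sum_eq. intros m Hm.
  replace (INR b ^ S n) with (INR b ^ m * INR b ^ (S n - m))
    by (rewrite <- pow_add; f_equal; lia).
  field. split; now apply pow_nonzero.
Qed.

Lemma Derive_periodic (f : R -> R) (z : nat) (y : R) :
  Zperiodic f -> Derive f (y + INR z) = Derive f y.
Proof.
  intros Hper.
  assert (Hstep : forall w, Derive f (w + 1) = Derive f w).
  { intros w. unfold Derive. do 2 f_equal. apply functional_extensionality. intros h.
    now rewrite Rplus_assoc, (Rplus_comm 1 h), <- Rplus_assoc, !Hper. }
  induction z as [|z IH].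
  - simpl. now rewrite Rplus_0_r.
  - now rewrite S_INR, <- IH, <- Rplus_assoc, Hstep.
Qed.

Lemma Derive_dilate (f : R -> R) (c y : R) : ex_derive f (c * y) ->
  Derive (fun x => f (c * x)) y = c * Derive f (c * y).
Proof.
  intros Hd. rewrite (Derive_comp f (fun x => c * x)); auto.
  - rewrite Derive_scal, Derive_id. ring.
  - apply ex_derive_scal, ex_derive_id.
Qed.

(* The key identity Y^{tau(p.)}(x, j) = p Y^tau(p x, j') for j' = p * j:
   the arguments of tau' differ by integers, which periodicity absorbs. *)
Lemma Y_dilate (b : nat) (lam : R) (tau : R -> R) (p : nat) (j j' : nat -> nat) (x : R) :
  (0 < b)%nat -> Zperiodic tau -> (forall y, ex_derive tau y) -> mul_digits b p j j' ->
  Y b lam (fun x => tau (INR p * x)) x j = INR p * Y b lam tau (INR p * x) j'.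
Proof.
  intros Hb Hper Hd Hjj'. unfold Y.
  assert (HB : INR b <> 0) by (apply not_0_INR; lia).
  rewrite Ropp_mult_distr_r_reverse, <- Series_scal_l. f_equal.
  apply Series_ext. intros n. rewrite !digit_sum_value, Derive_dilate by auto.
  set (m := (b ^ S n)%nat).
  assert (Hm : INR m = INR b ^ S n) by apply pow_INR.
  assert (Hm0 : INR m <> 0) by (rewrite Hm; now apply pow_nonzero).
  assert (Hdiv : INR p * INR (digits_value b j n)
                 = INR m * INR ((p * digits_value b j n) / m) + INR (digits_value b j' n)).
  { rewrite <- !mult_INR, <- plus_INR, (Hjj' n). f_equal. apply Nat.div_mod_eq. }
  replace (INR p * (x / INR b ^ S n + INR (digits_value b j n) / INR b ^ S n))
    with ((INR p * x / INR b ^ S n + INR (digits_value b j' n) / INR b ^ S n)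
          + INR ((p * digits_value b j n) / m)).
  - rewrite Derive_periodic by auto. ring.
  - rewrite <- Hm.
    replace (INR (digits_value b j' n))
      with (INR p * INR (digits_value b j n) - INR m * INR ((p * digits_value b j n) / m))
      by lra.
    field. exact Hm0.
Qed.

(* Condition (H) passes from tau to tau(p.): the pair i <> j is sent to the
   pair p*i <> p*j, distinct by injectivity. *)
Lemma condH_to_dilate (b : nat) (lam : R) (tau : R -> R) (p : nat) :
  (0 < b)%nat -> (0 < p)%nat -> Nat.gcd p b = 1%nat -> Zperiodic tau ->
  (forall y, ex_derive tau y) ->
  condH b lam tau -> condH b lam (fun x => tau (INR p * x)).
Proof.
  intros Hb Hp Hg Hper Hd HH i j Hi Hj Hij.
  assert (HP : INR p <> 0) by (apply not_0_INR; lia).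
  destruct (mul_digits_exists b p i Hb) as [i' [Hi' Hii']].
  destruct (mul_digits_exists b p j Hb) as [j' [Hj' Hjj']].
  assert (Hij' : i' <> j').
  { intros <-. apply Hij. now apply (mul_digits_injective b p i j i'). }
  destruct (HH i' j' Hi' Hj' Hij') as [x Hx].
  exists (x / INR p).
  rewrite (Y_dilate b lam tau p j j'), (Y_dilate b lam tau p i i') by auto.
  replace (INR p * (x / INR p)) with x by (field; exact HP).
  rewrite <- Rmult_minus_distr_l. now apply Rmult_integral_contrapositive.
Qed.

(* Conversely, by surjectivity every pair i <> j has preimages i' <> j'. *)
Lemma condH_of_dilate (b : nat) (lam : R) (tau : R -> R) (p : nat) :
  (0 < b)%nat -> (0 < p)%nat -> Nat.gcd p b = 1%nat -> Zperiodic tau ->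
  (forall y, ex_derive tau y) ->
  condH b lam (fun x => tau (INR p * x)) -> condH b lam tau.
Proof.
  intros Hb Hp Hg Hper Hd HH i j Hi Hj Hij.
  destruct (mul_digits_surjective b p i Hb Hp Hg Hi) as [i' [Hi' Hi'i]].
  destruct (mul_digits_surjective b p j Hb Hp Hg Hj) as [j' [Hj' Hj'j]].
  assert (Hij' : i' <> j').
  { intros <-. apply Hij. apply (digits_value_inj b); auto. intros n.
    now rewrite Hi'i, Hj'j. }
  destruct (HH i' j' Hi' Hj' Hij') as [x Hx].
  exists (INR p * x).
  rewrite (Y_dilate b lam tau p j' j), (Y_dilate b lam tau p i' i) in Hx by auto.
  intros E. apply Hx. now rewrite <- Rmult_minus_distr_l, E, Rmult_0_r.
Qed.

Lemma Ck_dilate (k : nat) (G : R -> R) (c : R) : Ck k G -> Ck k (fun x => G (c * x)).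
Proof.
  intros [Hder Hcont].
  assert (Hloc : forall x, locally x (fun y => forall l, (l <= k)%nat -> ex_derive_n G l y)).
  { intros x. apply filter_forall. intros y [|l] Hl; [exact I | apply Hder; lia]. }
  split.
  - intros m Hm x. apply ex_derive_n_comp_scal.
    apply filter_imp with (2 := Hloc (c * x)). intros y Hy l Hl. apply Hy. lia.
  - assert (E : Derive_n (fun y => G (c * y)) k = fun x => c ^ k * Derive_n G k (c * x)).
    { apply functional_extensionality. intros x. now apply Derive_n_comp_scal. }
    rewrite E. intros x.
    apply (continuous_comp (fun x => c * x) (fun y => c ^ k * Derive_n G k y)).
    + apply (continuous_mult (fun _ => c) (fun y => y));
        [apply continuous_const | apply continuous_id].
    + apply (continuous_mult (fun _ => c ^ k) (Derive_n G k));
        [apply continuous_const | apply Hcont].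
Qed.

Lemma Ck_dilate_iff (k : nat) (G : R -> R) (c : R) :
  c <> 0 -> (Ck k G <-> Ck k (fun x => G (c * x))).
Proof.
  intros Hc. split; [apply Ck_dilate |].
  intros H. apply (Ck_dilate _ _ (/ c)) in H.
  replace G with (fun x => G (c * (/ c * x))); auto.
  apply functional_extensionality. intros x. f_equal. now field.
Qed.

Lemma W_dilate (b : nat) (lam : R) (psi : R -> R) (c x : R) :
  W b lam (fun y => psi (c * y)) x = W b lam psi (c * x).
Proof.
  unfold W. apply Series_ext. intros n. do 2 f_equal. ring.
Qed.

Lemma regulating_period_dilate (b : nat) (lam : R) (k : nat) (psi : R -> R) (c t : R) :
  c <> 0 ->
  regulating_period b lam k psi t <->
  regulating_period b lam k (fun x => psi (c * x)) (t / c).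
Proof.
  intros Hc. unfold regulating_period.
  rewrite (Ck_dilate_iff k _ c Hc).
  replace (fun x => W b lam psi (c * x + t) - W b lam psi (c * x))
    with (fun x => W b lam (fun y => psi (c * y)) (x + t / c)
                   - W b lam (fun y => psi (c * y)) x); [reflexivity |].
  apply functional_extensionality. intros x. rewrite !W_dilate.
  now replace (c * (x + t / c)) with (c * x + t) by (field; exact Hc).
Qed.

Theorem mainTheorem9 (b : nat) (lam : R) (k : nat) (tau : R -> R) (p : nat) :
  (2 <= b)%nat ->
  1 / INR b < lam < 1 ->
  (1 <= k)%nat ->
  Zperiodic tau ->
  Ck k tau ->
  (2 <= p)%nat ->
  Nat.gcd p b = 1%nat ->
  (forall t : R,
     regulating_period b lam k tau t <->
     regulating_period b lam k (fun x => tau (INR p * x)) (t / INR p)) /\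
  (condH b lam tau <-> condH b lam (fun x => tau (INR p * x))).
Proof.
  intros Hb _ Hk Hper HCk Hp Hg.
  assert (Hd : forall y, ex_derive tau y).
  { intros y. destruct HCk as [Hder _]. exact (Hder 0%nat ltac:(lia) y). }
  split.
  - intros t. apply regulating_period_dilate, not_0_INR. lia.
  - split.
    + apply condH_to_dilate; auto; lia.
    + apply condH_of_dilate; auto; lia.
Qed.
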